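(* Let $T>0$ and let $a_0,b_0,\psi_0,\rho\in\mathbb{R}$ satisfy $a_0,b_0,\psi_0\ge0$ and $\rho>a_0^2+2b_0+2\psi_0/T$. Let $\psi:[0,T]\to[0,+\infty)$ be absolutely continuous with $\psi(0)=\psi_0$ and $$\psi'+\rho\le a_0\rho^{1/2}+b_0\quad\text{a.e. in the set }P:=\{t\in(0,T):\psi(t)>0\}.$$ Then: (i) if $\psi_0=0$, then $\psi$ vanishes identically; (ii) if $\psi_0>0$, there exists $T^*\in(0,T)$ with $T^*\le 2\psi_0/(\rho-a_0^2-2b_0)$ such that $\psi$ is strictly decreasing in $(0,T^* )$ and $\psi$ vanishes in $[T^*,T]$. *)

From HB Require Import structures.
From mathcomp Require Import all_boot all_order all_algebra.
From mathcomp Require Import all_classical all_reals all_analysis.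
Set Implicit Arguments. Unset Strict Implicit. Unset Printing Implicit Defensive.
Import Order.TTheory GRing.Theory Num.Theory.
Import numFieldNormedType.Exports.
Local Open Scope ring_scope.
Local Open Scope classical_set_scope.

Definition abs_continuous_on {R : realType} (lo hi : R) (f : R -> R) : Prop :=
  forall eps : R, 0 < eps -> exists2 delta : R, 0 < delta &
    forall (n : nat) (a b : nat -> R),
      (forall k, (k < n)%N -> lo <= a k /\ a k <= b k /\ b k <= hi) ->
      (forall k, (k.+1 < n)%N -> b k <= a k.+1) ->
      \sum_(k < n) (b k - a k) < delta ->
      \sum_(k < n) `|f (b k) - f (a k)| < eps.

(* While psi > 0 the hypothesis gives psi' <= -c a.e., where
   c = (rho - a0^2 - 2 b0) / 2 > 0, because 2 a0 sqrt(rho) <= a0^2 + rho.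
   An absolutely continuous function with derivative at most -c off a null
   set decreases at rate at least c; this is proved without integration by a
   gauge (Cousin) argument: the null set is covered by an open set of small
   measure, on which absolute continuity controls the increments, and
   elsewhere the derivative bound gives local monotonicity.  Consequently a
   zero of psi can never be left, and from psi(0) = psi0 > 0 the function
   decreases strictly until it first vanishes at some Ts <= psi0 / c, which
   the hypothesis on rho places before T. *)

From mathcomp Require Import all_boot all_order all_algebra.
From mathcomp Require Import all_classical all_reals all_analysis.
From mathcomp Require Import ring lra.

Set Implicit Arguments.
Unset Strict Implicit.
Unset Printing Implicit Defensive.

Import Order.TTheory GRing.Theory Num.Theory.
Import numFieldNormedType.Exports.
Local Open Scope ring_scope.
Local Open Scope classical_set_scope.

Section fine_partition.
Variable R : realType.
Implicit Types (d : R -> R) (s t : R).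

Definition fine_partition d s t :=
  exists n (u x : nat -> R), [/\ u 0%N = s, u n = t &
    forall k, (k < n)%N -> [/\ u k <= x k, x k <= u k.+1 & u k.+1 - u k < d (x k)]].

Lemma nondecreasing_upto (n : nat) (u : nat -> R) :
  (forall k, (k < n)%N -> u k <= u k.+1) ->
  forall i j, (i <= j)%N -> (j <= n)%N -> u i <= u j.
Proof.
move=> uS i; elim=> [|j IHj]; first by rewrite leqn0 => /eqP ->.
rewrite leq_eqVlt => /predU1P[-> //|ij] jn.
exact: le_trans (IHj ij (ltnW jn)) (uS j jn).
Qed.

Lemma fine_partition_snoc d s v y w :
  fine_partition d s v -> v <= y <= w -> w - v < d y -> fine_partition d s w.
Proof.
move=> [n [u [x [u0 un hux]]]] /andP[vy yw] wv.
exists n.+1, (fun k => if (k <= n)%N then u k else w),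
  (fun k => if (k < n)%N then x k else y); split => //; first by rewrite ltnn.
move=> k; rewrite ltnS leq_eqVlt => /predU1P[->|kn].
  by rewrite eqxx ltnn un; split.
by rewrite kn orbT; apply: hux.
Qed.

Lemma fine_partition_exists d s t :
  s <= t -> (forall x, 0 < d x) -> fine_partition d s t.
Proof.
move=> st d_gt0.
pose S := [set v | s <= v <= t /\ fine_partition d s v].
have Ss : S s.
  split; first by rewrite lexx st.
  by exists 0%N, (fun=> s), (fun=> s); split.
have supS : has_sup S by split; [exists s | exists t => v [/andP[_ ?] _]].
set m := sup S.
have sm : s <= m by apply: sup_upper_bound.
have mt : m <= t by apply: ge_sup; [exists s | move=> v [/andP[_ ?] _]].
have dm2 : 0 < d m / 2 by rewrite divr_gt0.
have [v Sv vm] := sup_adherent dm2 supS; rewrite -/m in vm.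
have vlem : v <= m by apply: sup_upper_bound.
have extend w : m <= w -> w <= t -> w - v < d m -> S w.
  move=> mw wt wv; split; first by rewrite wt (le_trans sm mw).
  by apply: fine_partition_snoc Sv.2 _ wv; rewrite vlem.
have [tle|tgt] := leP t (m + d m / 2).
  by have [] := extend t mt (lexx t) ltac:(lra).
have := sup_upper_bound supS (extend (m + d m / 2) ltac:(lra) (ltW tgt) ltac:(lra)).
by rewrite -/m; lra.
Qed.

End fine_partition.

Section absolute_continuity.
Variable R : realType.
Implicit Types (lo hi : R) (f g : R -> R).

Lemma abs_continuous_on_sub lo hi s t f : abs_continuous_on lo hi f ->
  lo <= s -> t <= hi -> abs_continuous_on s t f.
Proof.
move=> acf ls th eps eps0; have [d d0 hd] := acf eps eps0.
exists d => // n a b hab hord hs; apply: hd => // k kn.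
have [sa [ab bt]] := hab k kn.
by split; [exact: le_trans sa | split => //; exact: le_trans th].
Qed.

Lemma abs_continuous_onD lo hi f g : abs_continuous_on lo hi f ->
  abs_continuous_on lo hi g -> abs_continuous_on lo hi (fun z => f z + g z).
Proof.
move=> acf acg eps eps0.
have eps2 : 0 < eps / 2 by rewrite divr_gt0.
have [df df0 hdf] := acf _ eps2; have [dg dg0 hdg] := acg _ eps2.
exists (Num.min df dg) => [|n a b hab hord]; first by rewrite lt_min df0.
rewrite lt_min => /andP[sf sg].
have := hdf n a b hab hord sf; have := hdg n a b hab hord sg.
suff : \sum_(k < n) `|f (b k) + g (b k) - (f (a k) + g (a k))| <=
    \sum_(k < n) `|f (b k) - f (a k)| + \sum_(k < n) `|g (b k) - g (a k)| by lra.
rewrite -big_split /=; apply: ler_sum => k _.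
have -> : f (b k) + g (b k) - (f (a k) + g (a k)) =
  (f (b k) - f (a k)) + (g (b k) - g (a k)) by ring.
exact: ler_normD.
Qed.

Lemma abs_continuous_on_linear lo hi (c : R) :
  abs_continuous_on lo hi (fun z => c * z).
Proof.
move=> eps eps0; exists (eps / (`|c| + 1)) => [|n a b hab _ hsum].
  by rewrite divr_gt0 // ltr_wpDl.
have sum_ge0 : 0 <= \sum_(k < n) (b k - a k).
  by apply: sumr_ge0 => k _; have [_ [ab _]] := hab k (ltn_ord k); rewrite subr_ge0.
apply: (@le_lt_trans _ _ (`|c| * \sum_(k < n) (b k - a k))).
  rewrite mulr_sumr; apply: ler_sum => k _; rewrite -mulrBr normrM ler_wpM2l //.
  by have [_ [ab _]] := hab k (ltn_ord k); rewrite ger0_norm // subr_ge0.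
move: hsum; rewrite ltr_pdivlMr ?ltr_wpDl // mulrDr mulr1 => hsum.
by rewrite mulrC; apply: le_lt_trans hsum; rewrite lerDl.
Qed.

Lemma abs_continuous_on_gt0_near lo hi f x : abs_continuous_on lo hi f ->
  lo <= x <= hi -> 0 < f x ->
  exists2 d, 0 < d & forall y, lo <= y <= hi -> `|y - x| < d -> 0 < f y.
Proof.
move=> acf /andP[lx xh] fx0; have [d d0 hd] := acf _ fx0.
exists d => // y /andP[ly yh] yx.
have one_itv p q : lo <= p -> p <= q -> q <= hi -> q - p < d ->
    `|f q - f p| < f x.
  move=> lp pq qh qp; have := hd 1%N (fun=> p) (fun=> q) (fun k _ => conj lp (conj pq qh)).
  by rewrite !big_ord1; apply => // k; rewrite ltnS ltn0.
have : `|f y - f x| < f x.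
  have [xy|/ltW yx'] := leP x y; rewrite distrC in yx.
    by apply: one_itv => //; apply: le_lt_trans (ler_norm _) _; rewrite distrC.
  by rewrite distrC; apply: one_itv => //; apply: le_lt_trans (ler_norm _) yx.
by rewrite ltr_norml => /andP[]; lra.
Qed.

End absolute_continuity.

Section nonincreasing.
Variable R : realType.
Local Notation mu := (@lebesgue_measure R).

Definition nonincreasing_around (g : R -> R) (x r : R) :=
  forall z, `|z - x| < r -> (x <= z -> g z <= g x) /\ (z <= x -> g x <= g z).

Definition nonincreasing_at (g : R -> R) (x : R) :=
  exists2 r, 0 < r & nonincreasing_around g x r.

Lemma nonincreasing_around_le (g : R -> R) (x r u v : R) :
  nonincreasing_around g x r -> u <= x <= v -> v - u < r -> g v <= g u.
Proof.
move=> gdec /andP[ux xv] vu.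
have [_ gu] := gdec u ltac:(rewrite ltr_norml; apply/andP; split; lra).
have [gv _] := gdec v ltac:(rewrite ltr_norml; apply/andP; split; lra).
exact: le_trans (gv xv) (gu ux).
Qed.

Lemma negligible_open_cover (E : set R) (delta : R) :
  mu.-negligible E -> 0 < delta ->
  exists U, [/\ open U, E `<=` U & (mu U < delta%:E)%E].
Proof.
move=> [A [mA A0 EA]] delta0.
have Afin : (mu A < +oo)%E by rewrite A0 ltry.
have [U [oU AU UA]] := lebesgue_regularity_outer mA Afin delta0.
exists U; split => //; first exact: subset_trans AU.
have mU : measurable U by exact: measurable_realfun.open_measurable.
by rewrite (measureDI mu mU mA) setIidr // [X in (_ + X)%E]A0 adde0.
Qed.

Lemma sum_itv_lengths_lt (n : nat) (u : nat -> R) (P : pred nat) (U : set R) (delta : R) :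
  measurable U -> (mu U < delta%:E)%E -> (forall k, (k < n)%N -> u k <= u k.+1) ->
  (forall k, (k < n)%N -> P k -> `]u k, u k.+1] `<=` U) ->
  \sum_(k < n | P k) (u k.+1 - u k) < delta.
Proof.
move=> mU muU uS JU; have um := nondecreasing_upto uS.
pose J k := if P k then `]u k, u k.+1] else set0 : set R.
have mJ k : measurable (J k) by rewrite /J; case: ifP => _ //; exact: measurable_itv.
have muJ (k : 'I_n) : mu (J k) = if P k then (u k.+1 - u k)%:E else 0.
  rewrite /J; case: ifP => _; last exact: measure0.
  rewrite lebesgue_measure_itv /= lte_fin; case: ltP => [_|uu]; first by rewrite EFinB.
  by rewrite (@le_anti _ _ (u k.+1) (u k)) ?uu ?uS // subrr.
have disj i j z : (i < j)%N -> (j < n)%N -> J i z -> J j z -> False.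
  rewrite /J; case: ifP => _ ij jn //; case: ifP => _ //=; rewrite !in_itv /=.
  by move=> /andP[_ zu] /andP[uz _]; have := um _ _ ij (ltnW jn); lra.
have trJ : trivIset `I_n J.
  move=> i j /= iI jI [z [Jiz Jjz]].
  case: (ltngtP i j) => // [ij|ji]; first by case: (disj i j z ij jI).
  by case: (disj j i z ji iI).
have mUJ : measurable (\big[setU/set0]_(k < n) J k) by exact: bigsetU_measurable.
rewrite -lte_fin -sumEFin big_mkcond /= (eq_bigr _ (fun k _ => esym (muJ k))).
rewrite -measure_semi_additive_ord_I // => [|k _]; last exact: mJ.
apply: le_lt_trans muU; apply: le_measure; rewrite ?inE //.
rewrite -bigcup_mkord => z [k /= kn]; rewrite /J; case: ifP => // Pk; exact: JU.
Qed.

Lemma abs_continuous_increment_lt (g : R -> R) (s t eps : R) :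
  abs_continuous_on s t g -> 0 < eps ->
  exists2 delta, 0 < delta & forall (n : nat) (u : nat -> R) (bad : pred nat),
    u 0%N = s -> u n = t -> (forall k, (k < n)%N -> u k <= u k.+1) ->
    \sum_(k < n | bad k) (u k.+1 - u k) < delta ->
    (forall k, (k < n)%N -> ~~ bad k -> g (u k.+1) <= g (u k)) ->
    g t - g s < eps.
Proof.
move=> acg eps0; have [delta delta0 hd] := acg eps eps0.
exists delta => // n u bad u0 un uS sum_lt good.
have um := nondecreasing_upto uS.
pose b k := if bad k then u k.+1 else u k.
have b_in k : (k < n)%N -> s <= u k /\ u k <= b k /\ b k <= t.
  move=> kn; have ukS := uS k kn; have ukn := um k.+1 n kn (leqnn n).
  have u0k := um 0%N k (leq0n k) (ltnW kn).
  rewrite -u0 -un /b; case: ifP => _; rewrite ?lexx; do !split => //; exact: le_trans ukS ukn.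
have bS k : (k.+1 < n)%N -> b k <= u k.+1.
  by move=> kn; rewrite /b; case: ifP => _; rewrite ?lexx ?uS // ltnW.
have sum_b : \sum_(k < n) (b k - u k) < delta.
  rewrite big_mkcond /= in sum_lt; apply: le_lt_trans sum_lt.
  by apply: ler_sum => k _; rewrite /b; case: ifP; rewrite ?subrr.
have := hd n u b b_in bS sum_b; apply: le_lt_trans.
rewrite -u0 -un -(telescope_sumr (g \o u) (leq0n n)) big_mkord; apply: ler_sum => k _.
rewrite /b; case: ifP => [_|/negbT not_bad]; first exact: ler_norm.
by rewrite subrr normr0 subr_le0; apply: good.
Qed.

Lemma abs_continuous_nonincreasing (g : R -> R) (s t : R) (E : set R) :
  s < t -> mu.-negligible E -> abs_continuous_on s t g ->
  (forall x, s < x < t -> ~ E x -> nonincreasing_at g x) -> g t <= g s.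
Proof.
move=> st negE acg gdec; apply/ler_addgt0Pr => eps eps0.
rewrite -lerBlDl; apply: ltW.
have [delta delta0 hdelta] := abs_continuous_increment_lt acg eps0.
pose E' := E `|` [set s] `|` [set t].
have negE' : mu.-negligible E'.
  have pt_negl a : mu.-negligible [set a].
    by exists [set a]; split => //; exact: lebesgue_measure_set1.
  by apply: negligibleU => //; apply: negligibleU.
have [U [oU E'U muU]] := negligible_open_cover negE' delta0.
(* The endpoints join E since tags may fall on them, where nothing is assumed.
   On E' the gauge keeps the tagged intervals inside the small open set U,
   off E' it is a radius of local monotonicity. *)
have gauge y : exists r : R, [/\ 0 < r,
    E' y -> forall z, `|z - y| < r -> U z &
    ~ E' y -> s < y < t -> nonincreasing_around g y r].
  have [E'y|nE'y] := pselect (E' y).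
    have /nbhs_ballP[r r0 rU] : nbhs y U by apply: open_nbhs_nbhs; split => //; apply: E'U.
    by exists r; split => // _ z zy; apply: rU; rewrite -ball_normE /= distrC.
  have [sty|nsty] := pselect (s < y < t); last by exists 1; split => // _ /nsty.
  have [r r0 hr] := gdec y sty (fun Ey => nE'y (or_introl (or_introl Ey))).
  by exists r; split => // _ _.
have [d hd] := choice gauge.
have [n [u [x [u0 un hux]]]] :=
  fine_partition_exists (ltW st) (fun y => let: And3 r0 _ _ := hd y in r0).
have uS k : (k < n)%N -> u k <= u k.+1.
  by move=> kn; have [h1 h2 _] := hux k kn; exact: le_trans h2.
have u_in k : (k <= n)%N -> s <= u k <= t.
  by move=> kn; rewrite -u0 -un !(nondecreasing_upto uS).
apply: (hdelta n u (fun k => `[< E' (x k) >])) => // [|k kn /asboolPn good].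
  apply: (@sum_itv_lengths_lt n u (fun k => `[< E' (x k) >]) U) muU uS _.
    exact: measurable_realfun.open_measurable.
  move=> k kn /asboolP bad z /=; rewrite in_itv /= => /andP[uz zu].
  have [h1 h2 h3] := hux k kn; have [_ inU _] := hd (x k); apply: inU => //.
  by rewrite ltr_norml; apply/andP; split; lra.
have [h1 h2 h3] := hux k kn; have [_ _ gdec_x] := hd (x k).
have /andP[su _] := u_in k (ltnW kn); have /andP[_ ut] := u_in k.+1 kn.
have sxt : s < x k < t.
  rewrite !lt_neqAle (le_trans su h1) (le_trans h2 ut) !andbT.
  by apply/andP; split; apply/eqP => xe; apply: good; [left; right | right]; rewrite /= xe.
by apply: nonincreasing_around_le (gdec_x good sxt) _ h3; rewrite h1 h2.
Qed.

Lemma derive1_lt_nonincreasing_at (f : R -> R) (x c : R) :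
  derivable f x 1 -> derive1 f x < - c -> nonincreasing_at (fun z => f z + c * z) x.
Proof.
move=> df dlt.
have quot : (fun h => h^-1 *: ((f \o shift x) (h *: 1) - f x)) @ 0^' --> derive1 f x.
  by rewrite derive1E; exact: df.
have := cvgr_lt _ quot _ dlt; rewrite nearE /dnbhs /within /=.
move=> /(_ _) /nbhs_ballP[|r r0 hr]; first exact: dnbhs_filter.
exists r => // z zr; have [->|zx] := eqVneq z x; first by split.
have /= := hr (z - x); rewrite -ball_normE /= sub0r normrN scaler1 subrK.
move=> /(_ zr); rewrite subr_eq0 => /(_ zx).
have [xz|zx'] := ltP x z.
  rewrite ltr_pdivrMl ?subr_gt0 // => lt; split => // _; nra.
have {}zx' : z < x by rewrite lt_neqAle zx zx'.
rewrite ltr_ndivrMl ?subr_lt0 // => gt; split => [/(lt_le_trans zx')|_]; rewrite ?ltxx //; nra.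
Qed.

Lemma abs_continuous_derive1_le (g : R -> R) (s t c : R) (N : set R) :
  s < t -> mu.-negligible N -> abs_continuous_on s t g ->
  (forall x, s < x < t -> ~ N x -> derivable g x 1 /\ derive1 g x <= - c) ->
  g t <= g s - c * (t - s).
Proof.
move=> st negN acg dg.
have slope c' : c' < c -> g t + c' * t <= g s + c' * s.
  move=> c'c; apply: (@abs_continuous_nonincreasing (fun z => g z + c' * z) _ _ _ st negN).
    exact: abs_continuous_onD acg (abs_continuous_on_linear _ _ _).
  move=> x sxt nx; have [dx dlt] := dg x sxt nx.
  by apply: derive1_lt_nonincreasing_at dx _; lra.
apply/ler_addgt0Pr => e e0.
have ts : 0 < t - s by rewrite subr_gt0.
have w0 : 0 < e / (t - s) by rewrite divr_gt0.
have ew : e / (t - s) * (t - s) = e by rewrite divfK // gt_eqF.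
have := slope (c - e / (t - s)) ltac:(lra).
nra.
Qed.

End nonincreasing.

Section linear_decay.
Variables (R : realType) (T c : R) (psi : R -> R).
Hypotheses (c_gt0 : 0 < c) (psi_ge0 : forall t, 0 <= t <= T -> 0 <= psi t).
Hypothesis psi_ac : abs_continuous_on 0 T psi.
Hypothesis decay : forall s t, 0 <= s -> s < t -> t <= T ->
  (forall z, s < z < t -> 0 < psi z) -> psi t <= psi s - c * (t - s).

Lemma decay_lt s t : 0 <= s -> s < t -> t <= T ->
  (forall z, s < z < t -> 0 < psi z) -> psi t < psi s.
Proof.
move=> s0 st tT pos; have := decay s0 st tT pos.
have : 0 < c * (t - s) by rewrite mulr_gt0 // subr_gt0.
lra.
Qed.

Lemma decay_stays_zero t0 : 0 <= t0 <= T -> psi t0 = 0 ->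
  forall t, t0 <= t <= T -> psi t = 0.
Proof.
move=> /andP[t00 t0T] pt0 t /andP[t0t tT].
apply/eqP; rewrite eq_le psi_ge0 ?(le_trans t00) // andbT leNgt; apply/negP => pt.
pose S := [set z | t0 <= z <= t /\ psi z <= 0].
have St0 : S t0 by rewrite /S /= lexx t0t pt0.
have supS : has_sup S by split; [exists t0 | exists t => z [/andP[_ ?] _]].
set m := sup S.
have t0m : t0 <= m by apply: sup_upper_bound.
have mt : m <= t by apply: ge_sup; [exists t0 | move=> z [/andP[_ ?] _]].
have pm : psi m <= 0.
  rewrite leNgt; apply/negP => pm.
  have m_in : 0 <= m <= T by rewrite (le_trans t00 t0m) (le_trans mt tT).
  have [d d0 hd] := abs_continuous_on_gt0_near psi_ac m_in pm.
  have [z [/andP[t0z zt] pz] zm] := sup_adherent d0 supS; rewrite -/m in zm.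
  have zm' : z <= m by apply: sup_upper_bound => //; rewrite /S /= t0z zt.
  have z_in : 0 <= z <= T by rewrite (le_trans t00 t0z) (le_trans zt tT).
  have zmd : `|z - m| < d by rewrite distrC ger0_norm ?subr_ge0 //; lra.
  by have := hd z z_in zmd; rewrite ltNge pz.
have mt' : m < t by rewrite lt_neqAle mt andbT; apply: contraTneq pm => ->; rewrite -ltNge.
have pos z : m < z < t -> 0 < psi z.
  move=> /andP[mz zt]; rewrite ltNge; apply/negP => pz.
  have Sz : S z by split => //; rewrite (le_trans t0m (ltW mz)) (ltW zt).
  by have := sup_upper_bound supS Sz; rewrite -/m leNgt mz.
have := decay_lt (le_trans t00 t0m) mt' tT pos.
by rewrite ltNge (le_trans pm (ltW pt)).
Qed.

Lemma decay_first_zero : 0 < psi 0 -> psi 0 < c * T ->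
  exists Ts, [/\ 0 < Ts, Ts <= psi 0 / c, psi Ts = 0 &
    forall w, 0 <= w -> w < Ts -> 0 < psi w].
Proof.
move=> p0 p0T; set tau := psi 0 / c.
have ctau : c * tau = psi 0 by rewrite /tau mulrC divfK // gt_eqF.
have tau0 : 0 < tau by rewrite divr_gt0.
have tauT : tau < T by rewrite -(ltr_pM2l c_gt0) ctau.
pose Q := [set z | 0 <= z <= T /\ forall w, 0 <= w -> w <= z -> 0 < psi w].
have Q0 : Q 0.
  split => [|w w0 w0']; first by rewrite lexx (ltW (lt_trans tau0 tauT)).
  by rewrite (@le_anti _ _ w 0) ?w0 ?w0'.
have Qtau z : Q z -> z <= tau.
  move=> [/andP[z0 zT] hz]; rewrite leNgt; apply/negP => tz.
  have pos w : 0 < w < tau -> 0 < psi w.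
    by move=> /andP[w0 wt]; apply: hz (ltW w0) (ltW (lt_trans wt tz)).
  have := decay (lexx 0) tau0 (ltW tauT) pos; rewrite subr0 ctau subrr leNgt.
  by rewrite hz ?(ltW tau0) ?(ltW tz).
have supQ : has_sup Q by split; [exists 0 | exists tau].
set Ts := sup Q.
have Ts_tau : Ts <= tau by apply: ge_sup => //; exists 0.
have Ts_ge0 : 0 <= Ts by apply: sup_upper_bound.
have below w : 0 <= w -> w < Ts -> 0 < psi w.
  move=> w0 wTs; have dw : 0 < Ts - w by rewrite subr_gt0.
  have [z [_ hz] zw] := sup_adherent dw supQ; apply: hz w0 _.
  by rewrite -/Ts in zw; lra.
have extend z : 0 <= z < T -> (forall w, 0 <= w -> w < z -> 0 < psi w) -> 0 < psi z ->
    exists2 z', z < z' & Q z'.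
  move=> /andP[z0 zT] hz pz.
  have z_in : 0 <= z <= T by rewrite z0 ltW.
  have [d d0 hd] := abs_continuous_on_gt0_near psi_ac z_in pz.
  have zd : z < z + d / 2 by rewrite ltrDl divr_gt0.
  exists (Num.min (z + d / 2) T); first by rewrite lt_min zd.
  split; first by rewrite le_min ge_min lexx orbT andbT (le_trans z0 (ltW zd)) (le_trans z0 (ltW zT)).
  move=> w w0; rewrite le_min => /andP[wzd wT].
  have [wz|zw] := ltP w z; first exact: hz.
  by apply: hd; rewrite ?w0 ?wT // ger0_norm ?subr_ge0 //; lra.
have Ts0 : 0 < Ts.
  rewrite lt_neqAle Ts_ge0 andbT; apply/eqP => Ts0.
  have zero_in : (0 : R) <= 0 < T by rewrite lexx (lt_trans tau0 tauT).
  have vacuous w : 0 <= w -> w < 0 -> 0 < psi w by rewrite ltNge => ->.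
  have [z z0 Qz] := extend 0 zero_in vacuous p0.
  by have := sup_upper_bound supQ Qz; rewrite -/Ts -Ts0 leNgt z0.
exists Ts; split => //; apply/eqP; rewrite eq_le psi_ge0 ?andbT; last first.
  by rewrite Ts_ge0 (le_trans Ts_tau (ltW tauT)).
rewrite leNgt; apply/negP => pTs.
have Ts_in : 0 <= Ts < T by rewrite Ts_ge0 (le_lt_trans Ts_tau tauT).
have [z Tsz Qz] := extend Ts Ts_in below pTs.
by have := sup_upper_bound supQ Qz; rewrite -/Ts leNgt Tsz.
Qed.

End linear_decay.

Theorem lemma4p1 (R : realType) (T a0 b0 psi0 rho : R) (psi : R -> R)
  (hT : 0 < T) (ha0 : 0 <= a0) (hb0 : 0 <= b0) (hpsi0 : 0 <= psi0)
  (hrho : a0 ^+ 2 + 2 * b0 + 2 * psi0 / T < rho)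
  (hnonneg : forall t, 0 <= t <= T -> 0 <= psi t)
  (hac : abs_continuous_on 0 T psi)
  (hinit : psi 0 = psi0)
  (hineq : exists N : set R,
      (@lebesgue_measure R).-negligible N /\
      forall t, 0 < t < T -> 0 < psi t -> ~ N t ->
        derivable psi t 1 /\ derive1 psi t + rho <= a0 * Num.sqrt rho + b0) :
  (psi0 = 0 -> forall t, 0 <= t <= T -> psi t = 0) /\
  (0 < psi0 -> exists Ts : R,
      [/\ 0 < Ts < T,
          Ts <= 2 * psi0 / (rho - a0 ^+ 2 - 2 * b0),
          (forall s t, 0 < s -> s < t -> t < Ts -> psi t < psi s) &
          (forall t, Ts <= t <= T -> psi t = 0)]).
Proof.
subst psi0; have [N [negN hN]] := hineq.
set c := (rho - a0 ^+ 2 - 2 * b0) / 2.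
have c_gt0 : 0 < c.
  have : 0 <= 2 * psi 0 / T by rewrite divr_ge0 ?mulr_ge0 // ltW.
  rewrite /c; lra.
(* AM-GM: 2 a0 sqrt rho <= a0^2 + rho. *)
have dpsi x : 0 < x < T -> 0 < psi x -> ~ N x -> derivable psi x 1 /\ derive1 psi x <= - c.
  move=> xT px nx; have [dx hx] := hN x xT px nx; split => //.
  have rho_ge0 : 0 <= rho by move: c_gt0; rewrite /c; nra.
  have := sqr_ge0 (a0 - Num.sqrt rho); rewrite sqrrB sqr_sqrtr // /c; nra.
have decay s t : 0 <= s -> s < t -> t <= T -> (forall z, s < z < t -> 0 < psi z) ->
    psi t <= psi s - c * (t - s).
  move=> s0 st tT pos; apply: abs_continuous_derive1_le st negN _ _.
    exact: abs_continuous_on_sub hac s0 tT.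
  move=> x /andP[sx xt]; apply: dpsi; last by apply: pos; rewrite sx.
  by rewrite (le_lt_trans s0 sx) (lt_le_trans xt tT).
have stays := decay_stays_zero c_gt0 hnonneg hac decay.
split => [p0 t|p0]; first by apply: (stays 0); rewrite ?p0 ?(ltW hT) ?andbT.
have bound : 2 * psi 0 / (rho - a0 ^+ 2 - 2 * b0) = psi 0 / c.
  by rewrite /c invf_div mulrA (mulrC (psi 0)).
have psi0_cT : psi 0 < c * T by rewrite -ltr_pdivrMr // mulrC /c; lra.
have [Ts [Ts0 Ts_c pTs pos]] := decay_first_zero c_gt0 hnonneg hac decay p0 psi0_cT.
have TsT : Ts < T by apply: le_lt_trans Ts_c _; rewrite ltr_pdivrMr // mulrC.
exists Ts; split; rewrite ?bound ?Ts0 ?TsT //.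
- move=> s t s0 st tTs; apply: (decay_lt c_gt0 decay (ltW s0) st (ltW (lt_trans tTs TsT))).
  by move=> z /andP[sz zt]; apply: pos; rewrite ?(ltW (lt_trans s0 sz)) ?(lt_trans zt tTs).
- by apply: (stays Ts); rewrite ?(ltW Ts0) ?(ltW TsT).
Qed.
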